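(* Let $X$ be a Polish space, $\mathbf f=(f_n)_n$ a sequence of continuous real-valued functions on $X$ which is relatively compact in $\mathcal B_1(X)$, and $f$ a continuous function belonging to the pointwise closure of $\{f_n\}$. Then for every $L\in[\mathbb N]$: $L\in\mathcal L_{\mathbf f,f}$ if and only if the tree $S_L$ is well-founded.
   Context: $\mathcal B_1(X)$ is the set of real-valued Baire-1 functions on $X$; $(f_n)_n$ is relatively compact in $\mathcal B_1(X)$ if the closure of $\{f_n\}$ in $\mathbb R^X$ is compact and contained in $\mathcal B_1(X)$. $[\mathbb N]$ is the set of infinite subsets of $\mathbb N$; $\mathcal L_{\mathbf f,f}=\{L\in[\mathbb N]:(f_n)_{n\in L}\to f\text{ pointwise}\}$. Fix a compatible complete metric on $X$, a countable dense $D\subseteq X$ and an enumeration $(B_n)_n$ of all closed balls with centers in $D$ and rational radii. A finite sequence $w=(l_0,\dots,l_k)$ is acceptable if $B_{l_0}\supseteq\dots\supseteq B_{l_k}$ and $\mathrm{diam}(B_{l_i})\le\frac1{i+1}$ for all $i$; the empty sequence is acceptable. A tree on $\mathbb N\times\mathbb N$ is identified with a set of pairs $(s,w)$ of finite sequences of equal length closed under initial segments; well-founded means no infinite branch. For $d\in\mathbb N$, $S^d_L$ is the set of $(s,w)$ with $|s|=|w|=k$, $s=(n_0<\dots<n_{k-1})$ with $n_i\in L$, $w=(l_0,\dots,l_{k-1})$ acceptable, and $|f_{n_i}(z)-f(z)|>\frac1{d+1}$ for all $i<k$ and $z\in B_{l_i}$. $S_L$ consists of the empty pair together with all $(d^\frown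 s',d^\frown w')$ with $d\in\mathbb N$ and $(s',w')\in S^d_L$. *)

From Stdlib Require Import Reals Lra List QArith Qreals.
Open Scope R_scope.

Definition is_metric {X : Type} (d : X -> X -> R) : Prop :=
  (forall x y, 0 <= d x y) /\
  (forall x y, d x y = 0 <-> x = y) /\
  (forall x y, d x y = d y x) /\
  (forall x y z, d x z <= d x y + d y z).

Definition complete_metric {X : Type} (d : X -> X -> R) : Prop :=
  forall u : nat -> X,
    (forall eps, eps > 0 -> exists N, forall m n, (m >= N)%nat -> (n >= N)%nat ->
        d (u m) (u n) < eps) ->
    exists x, forall eps, eps > 0 -> exists N, forall n, (n >= N)%nat -> d (u n) x < eps.

Definition countable_set {X : Type} (D : X -> Prop) : Prop :=
  exists code : X -> nat, forall x y, D x -> D y -> code x = code y -> x = y.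

Definition dense_set {X : Type} (d : X -> X -> R) (D : X -> Prop) : Prop :=
  forall x eps, eps > 0 -> exists c, D c /\ d x c < eps.

Definition closed_ball {X : Type} (d : X -> X -> R) (c : X) (r : R) : X -> Prop :=
  fun z => d c z <= r.

Definition ball_enumeration {X : Type} (d : X -> X -> R) (D : X -> Prop)
  (B : nat -> X -> Prop) : Prop :=
  (forall n, exists c (q : Q), D c /\ (0 < q)%Q /\
       forall z, B n z <-> closed_ball d c (Q2R q) z) /\
  (forall c (q : Q), D c -> (0 < q)%Q ->
       exists n, forall z, B n z <-> closed_ball d c (Q2R q) z).

Definition diam_le {X : Type} (d : X -> X -> R) (A : X -> Prop) (r : R) : Prop :=
  forall x y, A x -> A y -> d x y <= r.

Definition continuous_on {X : Type} (d : X -> X -> R) (g : X -> R) : Prop :=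
  forall x eps, eps > 0 -> exists delta, delta > 0 /\
    forall y, d x y < delta -> Rabs (g y - g x) < eps.

Definition baire1 {X : Type} (d : X -> X -> R) (g : X -> R) : Prop :=
  exists h : nat -> X -> R, (forall n, continuous_on d (h n)) /\
    forall x, Un_cv (fun n => h n x) (g x).

Definition basic_nbhd {X : Type} (g : X -> R) (F : list X) (eps : R) (h : X -> R) : Prop :=
  forall x, In x F -> Rabs (h x - g x) < eps.

Definition pw_open {X : Type} (O : (X -> R) -> Prop) : Prop :=
  forall g, O g -> exists (F : list X) (eps : R), eps > 0 /\
    forall h, basic_nbhd g F eps h -> O h.

Definition pw_closure {X : Type} (A : (X -> R) -> Prop) (g : X -> R) : Prop :=
  forall (F : list X) (eps : R), eps > 0 -> exists h, A h /\ basic_nbhd g F eps h.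

Definition pw_compact {X : Type} (K : (X -> R) -> Prop) : Prop :=
  forall (I : Type) (U : I -> (X -> R) -> Prop),
    (forall i, pw_open (U i)) ->
    (forall g, K g -> exists i, U i g) ->
    exists l : list I, forall g, K g -> exists i, In i l /\ U i g.

Definition range_seq {X : Type} (fs : nat -> X -> R) : (X -> R) -> Prop :=
  fun g => exists n, g = fs n.

Definition rel_compact_B1 {X : Type} (d : X -> X -> R) (fs : nat -> X -> R) : Prop :=
  pw_compact (pw_closure (range_seq fs)) /\
  (forall g, pw_closure (range_seq fs) g -> baire1 d g).

Definition infinite_nat (L : nat -> Prop) : Prop :=
  forall m, exists n, (n >= m)%nat /\ L n.

Definition converges_along {X : Type} (fs : nat -> X -> R) (f : X -> R)
  (L : nat -> Prop) : Prop :=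
  forall x eps, eps > 0 -> exists N, forall n, L n -> (n >= N)%nat ->
    Rabs (fs n x - f x) < eps.

Definition acceptable {X : Type} (d : X -> X -> R) (B : nat -> X -> Prop)
  (w : list nat) : Prop :=
  (forall i, (S i < length w)%nat ->
     forall z, B (nth (S i) w 0%nat) z -> B (nth i w 0%nat) z) /\
  (forall i, (i < length w)%nat -> diam_le d (B (nth i w 0%nat)) (1 / (INR i + 1))).

Definition S_d {X : Type} (d : X -> X -> R) (B : nat -> X -> Prop)
  (fs : nat -> X -> R) (f : X -> R) (L : nat -> Prop) (dd : nat)
  (s w : list nat) : Prop :=
  length s = length w /\
  (forall i j, (i < j)%nat -> (j < length s)%nat -> (nth i s 0 < nth j s 0)%nat) /\
  (forall i, (i < length s)%nat -> L (nth i s 0%nat)) /\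
  acceptable d B w /\
  (forall i, (i < length s)%nat -> forall z, B (nth i w 0%nat) z ->
     Rabs (fs (nth i s 0%nat) z - f z) > 1 / (INR dd + 1)).

Definition S_tree {X : Type} (d : X -> X -> R) (B : nat -> X -> Prop)
  (fs : nat -> X -> R) (f : X -> R) (L : nat -> Prop) (s w : list nat) : Prop :=
  (s = nil /\ w = nil) \/
  (exists dd s' w', s = dd :: s' /\ w = dd :: w' /\ S_d d B fs f L dd s' w').

Definition well_founded_tree (T : list nat -> list nat -> Prop) : Prop :=
  ~ exists a b : nat -> nat,
      forall k, T (map a (seq 0 k)) (map b (seq 0 k)).

From Stdlib Require Import Reals List QArith Qreals.
From Stdlib Require Import Lra Lia ZArith ClassicalEpsilon Classical.
Open Scope R_scope.

(* An infinite branch of S_L is a label d together with an increasing sequence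
   (n_i) in L and a chain of enumerated balls B_{l_0} ⊇ B_{l_1} ⊇ ... with
   diam B_{l_i} <= 1/(i+1) and |f_{n_i} - f| > 1/(d+1) on B_{l_i}; we call
   this data a bad branch ([ill_founded_iff]).
   - If f_{n} -> f along L, a bad branch is impossible: by completeness the
     balls B_{l_i} share a point y (Cantor's intersection theorem), and there
     |f_{n_i}(y) - f(y)| stays above 1/(d+1).
   - If convergence fails at some x with gap eps along an increasing sequence
     (n_i) in L, continuity of f_{n_i} and f keeps the gap above eps/2 on a
     neighbourhood of x of radius del_i, and density of D yields a chain of
     enumerated balls around x, the i-th inside that neighbourhood. *)

Lemma inv_succ_pos (N : nat) : 0 < 1 / (INR N + 1).
Proof. pose proof (pos_INR N). apply Rdiv_lt_0_compat; lra. Qed.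

Lemma inv_succ_lt (t : R) : t > 0 -> exists N : nat, 1 / (INR N + 1) < t.
Proof.
  intros Ht. destruct (archimed_cor1 t Ht) as [N [HN HN0]].
  exists N. apply Rle_lt_trans with (/ INR N); [|exact HN].
  assert (0 < INR N) by (apply lt_0_INR; lia).
  unfold Rdiv. rewrite Rmult_1_l. apply Rlt_le, Rinv_lt_contravar; [nra|lra].
Qed.

Lemma Q2R_inv_succ (N : nat) : Q2R (1 # Pos.of_succ_nat N) = 1 / (INR N + 1).
Proof.
  unfold Q2R; simpl Qnum; simpl Qden.
  rewrite Zpos_P_of_succ_nat, succ_IZR, <- INR_IZR_INZ. lra.
Qed.

Lemma Q2R_pos (q : Q) : (0 < q)%Q -> 0 < Q2R q.
Proof. intros Hq. apply Qlt_Rlt in Hq. unfold Q2R at 1 in Hq. simpl in Hq. lra. Qed.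

Lemma rational_below (t : R) : t > 0 -> exists q : Q, (0 < q)%Q /\ 0 < Q2R q < t.
Proof.
  intros Ht. destruct (inv_succ_lt t Ht) as [N HN].
  exists (1 # Pos.of_succ_nat N). rewrite Q2R_inv_succ.
  split; [reflexivity|]. split; [apply inv_succ_pos|exact HN].
Qed.

Lemma strict_mono_nat (u : nat -> nat) :
  (forall i, (u i < u (S i))%nat) -> forall i j, (i < j)%nat -> (u i < u j)%nat.
Proof.
  intros Hu i j Hij. induction Hij as [|j Hij IH]; [apply Hu|].
  specialize (Hu j). lia.
Qed.

Lemma strict_mono_nat_ge (u : nat -> nat) :
  (forall i, (u i < u (S i))%nat) -> forall i, (i <= u i)%nat.
Proof. intros Hu i. induction i as [|i IH]; [lia|]. specialize (Hu i). lia. Qed.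

Lemma nested_le {X : Type} (A : nat -> X -> Prop) :
  (forall i z, A (S i) z -> A i z) -> forall i j, (i <= j)%nat -> forall z, A j z -> A i z.
Proof. intros HA i j Hij. induction Hij; auto. Qed.

Section Metric.

Variable X : Type.
Variable d : X -> X -> R.
Hypothesis hd : is_metric d.

Definition closed_set (A : X -> Prop) : Prop :=
  forall x, (forall eps, eps > 0 -> exists z, A z /\ d z x < eps) -> A x.

Lemma closed_ball_closed (c : X) (r : R) : closed_set (closed_ball d c r).
Proof.
  destruct hd as (_ & _ & _ & Htri).
  intros x Hx. unfold closed_ball. apply Rnot_lt_le. intros Hlt.
  destruct (Hx (d c x - r)) as (z & Hz & Hzx); [lra|].
  unfold closed_ball in Hz. specialize (Htri c z x). lra.
Qed.

Lemma cantor_intersection (hc : complete_metric d) (A : nat -> X -> Prop) :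
  (forall i, exists z, A i z) ->
  (forall i z, A (S i) z -> A i z) ->
  (forall i, diam_le d (A i) (1 / (INR i + 1))) ->
  (forall i, closed_set (A i)) ->
  exists y, forall i, A i y.
Proof.
  intros Hne Hnest Hdiam Hcl.
  destruct (choice _ Hne) as [e He].
  assert (Hcauchy : forall eps, eps > 0 -> exists N, forall m k, (m >= N)%nat -> (k >= N)%nat ->
            d (e m) (e k) < eps).
  { intros eps Heps. destruct (inv_succ_lt eps Heps) as [N HN]. exists N. intros m k Hm Hk.
    apply Rle_lt_trans with (1 / (INR N + 1)); [|exact HN].
    apply Hdiam; [apply (nested_le A Hnest N m) | apply (nested_le A Hnest N k)]; auto. }
  destruct (hc e Hcauchy) as [y Hy]. exists y. intros i. apply Hcl. intros eps Heps.
  destruct (Hy eps Heps) as [N HN]. exists (e (Nat.max N i)). split.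
  - apply (nested_le A Hnest i (Nat.max N i)); [lia|apply He].
  - apply HN. lia.
Qed.

End Metric.

(* Positive rational radii below a given positive bound t_i, each less than
   a third of the previous one (this makes concentric chains nested). *)
Lemma rational_radii (t : nat -> R) : (forall i, t i > 0) ->
  exists r : nat -> Q, forall i,
    (0 < r i)%Q /\ 0 < Q2R (r i) < t i /\ Q2R (r (S i)) < Q2R (r i) / 3.
Proof.
  intros Ht.
  assert (Hqb : forall s : R, exists q : Q, s > 0 -> (0 < q)%Q /\ 0 < Q2R q < s).
  { intros s. destruct (Rlt_dec 0 s) as [Hs|Hs].
    - destruct (rational_below s Hs) as [q Hq]. exists q. auto.
    - exists 0%Q. intros; lra. }
  destruct (choice _ Hqb) as [qb Hqb_spec].
  set (r := fix r i := match i with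
                       | O => qb (t O)
                       | S j => qb (Rmin (t (S j)) (Q2R (r j) / 3)) end).
  assert (Hr : forall i, (0 < r i)%Q /\ 0 < Q2R (r i) < t i).
  { induction i as [|i IH]; [apply Hqb_spec, Ht|].
    destruct (Hqb_spec (Rmin (t (S i)) (Q2R (r i) / 3))) as (Hq & Hpos & Hlt).
    { apply Rmin_glb_lt; [apply Ht|lra]. }
    pose proof (Rmin_l (t (S i)) (Q2R (r i) / 3)). simpl. repeat split; auto; lra. }
  exists r. intros i. split; [apply Hr|]. split; [apply Hr|].
  destruct (Hr i) as (_ & Hpos & _).
  destruct (Hqb_spec (Rmin (t (S i)) (Q2R (r i) / 3))) as (_ & _ & Hlt).
  { apply Rmin_glb_lt; [apply Ht|lra]. }
  pose proof (Rmin_r (t (S i)) (Q2R (r i) / 3)). simpl. lra.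
Qed.

Section BallEnumeration.

Variable X : Type.
Variable d : X -> X -> R.
Hypothesis hd : is_metric d.
Variable D : X -> Prop.
Variable B : nat -> X -> Prop.
Hypothesis hB : ball_enumeration d D B.

Lemma enumerated_ball_nonempty (k : nat) : exists z, B k z.
Proof.
  destruct hd as (_ & Hzero & _). destruct (proj1 hB k) as (c & q & _ & Hq & Hk).
  exists c. apply Hk. unfold closed_ball. rewrite (proj2 (Hzero c c) eq_refl).
  apply Q2R_pos in Hq. lra.
Qed.

Lemma enumerated_ball_closed (k : nat) : closed_set X d (B k).
Proof.
  destruct (proj1 hB k) as (c & q & _ & _ & Hk).
  intros x Hx. apply Hk. apply (closed_ball_closed X d hd). intros eps Heps.
  destruct (Hx eps Heps) as (z & Hz & Hzx). exists z. split; [apply Hk|]; assumption.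
Qed.

Hypothesis hDd : dense_set d D.

Lemma enumerated_ball_near (x : X) (q : Q) : (0 < q)%Q ->
  exists k, (forall z, d x z < Q2R q / 2 -> B k z) /\
            (forall z, B k z -> d x z < 3 * Q2R q / 2) /\
            diam_le d (B k) (2 * Q2R q).
Proof.
  intros Hq. destruct hd as (_ & _ & Hsym & Htri).
  pose proof (Q2R_pos q Hq) as Hqpos.
  destruct (hDd x (Q2R q / 2)) as (c & Hc & Hxc); [lra|].
  destruct (proj2 hB c q Hc Hq) as [k Hk]. exists k. unfold closed_ball in Hk.
  repeat split.
  - intros z Hz. apply Hk. specialize (Htri c x z). rewrite (Hsym c x) in Htri. lra.
  - intros z Hz. apply Hk in Hz. specialize (Htri x c z). lra.
  - intros z1 z2 H1 H2. apply Hk in H1. apply Hk in H2.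
    specialize (Htri z1 c z2). rewrite (Hsym z1 c) in Htri. lra.
Qed.

Lemma ball_chain_at (x : X) (del : nat -> R) : (forall i, del i > 0) ->
  exists l : nat -> nat,
    (forall i z, B (l (S i)) z -> B (l i) z) /\
    (forall i, diam_le d (B (l i)) (1 / (INR i + 1))) /\
    (forall i z, B (l i) z -> d x z < del i).
Proof.
  intros Hdel.
  destruct (rational_radii (fun i => Rmin (del i / 3) (1 / (2 * (INR i + 1))))) as [r Hr].
  { intros i. pose proof (pos_INR i). apply Rmin_glb_lt; [specialize (Hdel i); lra|].
    apply Rdiv_lt_0_compat; lra. }
  assert (Hball : forall i, exists k, (forall z, d x z < Q2R (r i) / 2 -> B k z) /\
            (forall z, B k z -> d x z < 3 * Q2R (r i) / 2) /\
            diam_le d (B k) (2 * Q2R (r i))).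
  { intros i. apply enumerated_ball_near, Hr. }
  destruct (choice _ Hball) as [l Hl]. exists l. repeat split.
  - intros i z Hz. apply (proj1 (Hl i)). apply (proj1 (proj2 (Hl (S i)))) in Hz.
    destruct (Hr i) as (_ & _ & Hdec). lra.
  - intros i z1 z2 H1 H2. pose proof (proj2 (proj2 (Hl i)) z1 z2 H1 H2).
    destruct (Hr i) as (_ & (_ & Hlt) & _).
    pose proof (Rmin_r (del i / 3) (1 / (2 * (INR i + 1)))).
    assert (1 / (2 * (INR i + 1)) = (1 / (INR i + 1)) / 2)
      by (pose proof (pos_INR i); field; lra).
    lra.
  - intros i z Hz. apply (proj1 (proj2 (Hl i))) in Hz.
    destruct (Hr i) as (_ & (_ & Hlt) & _).
    pose proof (Rmin_l (del i / 3) (1 / (2 * (INR i + 1)))). specialize (Hdel i). lra.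
Qed.

End BallEnumeration.

Lemma nth_map_seq0 (u : nat -> nat) (k i : nat) :
  (i < k)%nat -> nth i (map u (seq 0 k)) 0%nat = u i.
Proof.
  intros Hi. rewrite (nth_indep _ 0%nat (u 0%nat)) by (rewrite length_map, length_seq; lia).
  rewrite map_nth, seq_nth by lia. reflexivity.
Qed.

Lemma map_seq_succ (u : nat -> nat) (k : nat) :
  map u (seq 0 (S k)) = u 0%nat :: map (fun i => u (S i)) (seq 0 k).
Proof. simpl. f_equal. rewrite <- seq_shift, map_map. reflexivity. Qed.

Section Tree.

Variable X : Type.
Variable d : X -> X -> R.
Variable B : nat -> X -> Prop.
Variable fs : nat -> X -> R.
Variable f : X -> R.
Variable L : nat -> Prop.

Definition bad_branch (dd : nat) (n l : nat -> nat) : Prop :=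
  (forall i, (n i < n (S i))%nat) /\
  (forall i, L (n i)) /\
  (forall i z, B (l (S i)) z -> B (l i) z) /\
  (forall i, diam_le d (B (l i)) (1 / (INR i + 1))) /\
  (forall i z, B (l i) z -> Rabs (fs (n i) z - f z) > 1 / (INR dd + 1)).

Lemma S_d_prefixes_iff (dd : nat) (n l : nat -> nat) :
  (forall k, S_d d B fs f L dd (map n (seq 0 k)) (map l (seq 0 k))) <-> bad_branch dd n l.
Proof.
  unfold S_d, acceptable. split.
  - intros H. repeat split.
    + intros i. destruct (H (S (S i))) as (_ & Hinc & _).
      specialize (Hinc i (S i)). rewrite length_map, length_seq, !nth_map_seq0 in Hinc by lia.
      apply Hinc; lia.
    + intros i. destruct (H (S i)) as (_ & _ & HL & _).
      specialize (HL i). rewrite length_map, length_seq, nth_map_seq0 in HL by lia. apply HL; lia.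
    + intros i. destruct (H (S (S i))) as (_ & _ & _ & (Hnest & _) & _).
      specialize (Hnest i). rewrite length_map, length_seq, !nth_map_seq0 in Hnest by lia.
      apply Hnest; lia.
    + intros i. destruct (H (S i)) as (_ & _ & _ & (_ & Hdiam) & _).
      specialize (Hdiam i). rewrite length_map, length_seq, nth_map_seq0 in Hdiam by lia.
      apply Hdiam; lia.
    + intros i. destruct (H (S i)) as (_ & _ & _ & _ & Hfar).
      specialize (Hfar i). rewrite length_map, length_seq, !nth_map_seq0 in Hfar by lia.
      apply Hfar; lia.
  - intros (Hinc & HL & Hnest & Hdiam & Hfar) k.
    rewrite !length_map, !length_seq. repeat split.
    + intros i j Hij Hj. rewrite !nth_map_seq0 by lia. apply strict_mono_nat; assumption.
    + intros i Hi. rewrite nth_map_seq0 by lia. apply HL.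
    + intros i Hi. rewrite !nth_map_seq0 by lia. apply Hnest.
    + intros i Hi. rewrite nth_map_seq0 by lia. apply Hdiam.
    + intros i Hi. rewrite !nth_map_seq0 by lia. apply Hfar.
Qed.

(* An infinite branch of S_L is a label d followed by an infinite branch of
   S^d_L, i.e. exactly the data of a bad branch. *)
Lemma ill_founded_iff :
  ~ well_founded_tree (S_tree d B fs f L) <-> exists dd n l, bad_branch dd n l.
Proof.
  unfold well_founded_tree. split.
  - intros Hill. apply NNPP in Hill. destruct Hill as (a & b & Hab).
    exists (a 0%nat), (fun i => a (S i)), (fun i => b (S i)).
    apply S_d_prefixes_iff. intros k.
    specialize (Hab (S k)). rewrite !map_seq_succ in Hab.
    destruct Hab as [(Hnil & _)|(dd & s & w & Hs & Hw & Hsd)]; [discriminate|].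
    injection Hs as -> ->. injection Hw as Hdd ->. congruence.
  - intros (dd & n & l & Hbad) Hwf. apply Hwf.
    pose proof (proj2 (S_d_prefixes_iff dd n l) Hbad) as Hsd.
    exists (fun k => match k with O => dd | S i => n i end),
           (fun k => match k with O => dd | S i => l i end).
    intros [|k]; [left; split; reflexivity|right].
    rewrite !map_seq_succ. exists dd, (map n (seq 0 k)), (map l (seq 0 k)). auto.
Qed.

End Tree.

Lemma extract_increasing (P : nat -> Prop) :
  (forall N, exists n, (n >= N)%nat /\ P n) ->
  exists u : nat -> nat, (forall i, (u i < u (S i))%nat) /\ (forall i, P (u i)).
Proof.
  intros HP. destruct (choice _ HP) as [next Hnext].
  set (u := fix u i := match i with O => next O | S j => next (S (u j)) end).
  exists u. split.
  - intros i. simpl. destruct (Hnext (S (u i))) as [Hge _]. lia.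
  - intros [|i]; apply Hnext.
Qed.

Lemma failure_of_convergence {X : Type} (fs : nat -> X -> R) (f : X -> R) (L : nat -> Prop) :
  ~ converges_along fs f L ->
  exists x eps, eps > 0 /\
    forall N, exists n, (n >= N)%nat /\ (L n /\ Rabs (fs n x - f x) >= eps).
Proof.
  intros Hnc. apply NNPP. intros Hno. apply Hnc. intros x eps Heps.
  apply NNPP. intros Hnoeps. apply Hno. exists x, eps. split; [exact Heps|].
  intros N. apply NNPP. intros HnoN. apply Hnoeps. exists N. intros n HLn Hn.
  apply Rnot_le_lt. intros Hle. apply HnoN. exists n. repeat split; auto; lra.
Qed.

Lemma continuous_gap {X : Type} (d : X -> X -> R) (g h : X -> R) (x : X) (eps : R) :
  continuous_on d g -> continuous_on d h -> eps > 0 -> Rabs (g x - h x) >= eps ->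
  exists del, del > 0 /\ forall z, d x z < del -> Rabs (g z - h z) > eps / 2.
Proof.
  intros Hg Hh Heps Hgap.
  destruct (Hg x (eps / 4)) as (dg & Hdg & Hgz); [lra|].
  destruct (Hh x (eps / 4)) as (dh & Hdh & Hhz); [lra|].
  exists (Rmin dg dh). split; [apply Rmin_glb_lt; assumption|].
  intros z Hz. pose proof (Rmin_l dg dh). pose proof (Rmin_r dg dh).
  specialize (Hgz z ltac:(lra)). specialize (Hhz z ltac:(lra)).
  revert Hgap Hgz Hhz. split_Rabs; lra.
Qed.

Section Equivalence.

Variable X : Type.
Variable d : X -> X -> R.
Hypothesis hd : is_metric d.
Variable D : X -> Prop.
Variable B : nat -> X -> Prop.
Hypothesis hB : ball_enumeration d D B.
Variable fs : nat -> X -> R.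
Variable f : X -> R.
Variable L : nat -> Prop.

(* Convergence along L rules out bad branches: the chain of balls meets in a
   point y where f_{n_i}(y) cannot converge to f(y). *)
Lemma convergence_excludes_bad_branch (hc : complete_metric d) :
  converges_along fs f L -> forall dd n l, ~ bad_branch X d B fs f L dd n l.
Proof.
  intros Hconv dd n l (Hinc & HL & Hnest & Hdiam & Hfar).
  destruct (cantor_intersection X d hc (fun i => B (l i))) as [y Hy].
  - intros i. apply (enumerated_ball_nonempty X d hd D B hB).
  - exact Hnest.
  - exact Hdiam.
  - intros i. apply (enumerated_ball_closed X d hd D B hB).
  - destruct (Hconv y _ (inv_succ_pos dd)) as [N HN].
    specialize (HN (n N) (HL N) (strict_mono_nat_ge n Hinc N)).
    specialize (Hfar N y (Hy N)). lra.
Qed.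

Lemma bad_branch_of_divergence (hDd : dense_set d D)
  (hfs : forall k, continuous_on d (fs k)) (hf : continuous_on d f)
  (x : X) (eps : R) (n : nat -> nat) :
  eps > 0 -> (forall i, (n i < n (S i))%nat) -> (forall i, L (n i)) ->
  (forall i, Rabs (fs (n i) x - f x) >= eps) ->
  exists dd l, bad_branch X d B fs f L dd n l.
Proof.
  intros Heps Hinc HL Hgap.
  destruct (inv_succ_lt (eps / 2)) as [dd Hdd]; [lra|].
  assert (Hdel : forall i, exists del, del > 0 /\
            forall z, d x z < del -> Rabs (fs (n i) z - f z) > eps / 2).
  { intros i. apply continuous_gap; auto. }
  destruct (choice _ Hdel) as [del Hdelspec].
  destruct (ball_chain_at X d hd D B hB hDd x del) as (l & Hnest & Hdiam & Hnear).
  { intros i. apply Hdelspec. }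
  exists dd, l. repeat split; auto.
  intros i z Hz. apply Hnear, Hdelspec in Hz. lra.
Qed.

End Equivalence.

Theorem lemma5p12
  (X : Type) (d : X -> X -> R)
  (hd : is_metric d) (hcomplete : complete_metric d)
  (D : X -> Prop) (hDc : countable_set D) (hDd : dense_set d D)
  (B : nat -> X -> Prop) (hB : ball_enumeration d D B)
  (fs : nat -> X -> R) (hfs : forall n, continuous_on d (fs n))
  (hrc : rel_compact_B1 d fs)
  (f : X -> R) (hf : continuous_on d f) (hfcl : pw_closure (range_seq fs) f)
  (L : nat -> Prop) (hL : infinite_nat L) :
  converges_along fs f L <-> well_founded_tree (S_tree d B fs f L).
Proof.
  split.
  - intros Hconv. apply NNPP. intros Hill.
    destruct (proj1 (ill_founded_iff X d B fs f L) Hill) as (dd & n & l & Hbad).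
    exact (convergence_excludes_bad_branch X d hd D B hB fs f L hcomplete Hconv dd n l Hbad).
  - intros Hwf. apply NNPP. intros Hnc.
    destruct (failure_of_convergence fs f L Hnc) as (x & eps & Heps & Hoften).
    destruct (extract_increasing _ Hoften) as (n & Hinc & Hn).
    destruct (bad_branch_of_divergence X d hd D B hB fs f L hDd hfs hf x eps n Heps Hinc
                (fun i => proj1 (Hn i)) (fun i => proj2 (Hn i))) as (dd & l & Hbad).
    apply (proj2 (ill_founded_iff X d B fs f L)); eauto.
Qed.
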